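(* Let $\mathrm{H}$ be a set of Horn rules and let $\mathrm{H}'\subseteq\mathrm H$ be a fracturable subset of the dependency graph $\mathsf{DG}(\mathrm{H})$. Then $\mathrm{H}\setminus\mathrm{H}'$ permutes above $\mathrm{H}'$.
   Context: Fix a non-empty finite set $\mathtt{E}$ of edge types and a countably infinite set $\mathtt S$ of sequents (atomic labels). A g-sequent is a finite directed graph with vertices in a universe $\mathcal U$, edge relations $\mathcal{E}_a$ for $a\in\mathtt{E}$, and a labelling of vertices by sequents; it is written $\Gamma\vdash\Delta$ with $\Gamma$ the set of edge atoms $w\mathcal{E}_a u$ and $\Delta$ the set of prefixed sequents $w:S$; commas denote disjoint union. Let $\overline{\mathtt E}=\{\bar a\mid a\in\mathtt E\}$, $\bar{\bar z}=z$, $\overline{x_1\cdots x_n}=\bar x_n\cdots\bar x_1$, $\varepsilon$ the empty string. For $s=x_1\cdots x_n$, $w\mathcal{E}_s u$ abbreviates edge atoms $w\mathcal{E}_{x_1}v_1,\dots,v_{n-1}\mathcal{E}_{x_n}u$ for some vertices $v_i$, with $v\mathcal E_{\bar a}z$ meaning $z\mathcal E_a v$ and $w\mathcal E_\varepsilon u$ meaning $w=u$. A forward Horn rule $h_f$ (for $a\in\mathtt E$, string $s$) has premise $\Gamma,w\mathcal{E}_s u,w\mathcal{E}_a u\vdash\Delta$ and conclusion $\Gamma,w\mathcal{E}_s u\vdash\Delta$; a backward Horn rule $h_b$ is the same with $w\mathcal{E}_a u$ replaced by $u\mathcal{E}_a w$. Their grammars are $\mathbf{G}(h_f)=\{a\longrightarrow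 s,\bar a\longrightarrow\bar s\}$, $\mathbf{G}(h_b)=\{\bar a\longrightarrow s,a\longrightarrow\bar s\}$; for a production rule $p=x\longrightarrow t$ set $\bar p=\bar x\longrightarrow\bar t$; $(p,\bar p)$ is a production pair, and $P(\mathbf G)$ is the set of production pairs of a rule set $\mathbf G$ closed under $p\mapsto\bar p$; $P(h):=P(\mathbf G(h))$. Dependency graph: for distinct production pairs $(p,\bar p),(p',\bar p')$ with $p=x\longrightarrow s$, $p'=y\longrightarrow t$, $(p',\bar p')$ depends on $(p,\bar p)$, written $(p,\bar p)\sqsubset(p',\bar p')$, iff $s$ or $\bar s$ has the form $s_1ys_2$. $\sqsubseteq$ is the reflexive-transitive closure of $\sqsubset$. For a set $\mathrm H$ of Horn rules, $\mathsf{DG}(\mathrm H)=(\mathrm H,\sqsubseteq')$ where $h\sqsubseteq' h'$ iff $(p,\bar p)\sqsubseteq(p',\bar p')$ for $(p,\bar p)\in P(h)$, $(p',\bar p')\in P(h')$ (in the dependency relation of the union of the grammars of $\mathrm H$). In a dependency graph $(V,\sqsubseteq)$, a subset $V'\subseteq V$ is fracturable iff there are no $v\in V'$, $v'\in V\setminus V'$ with $v\sqsubseteq v'$; $V''$ is anti-fracturable iff $V''=V\setminus V'$ for some fracturable $V'$. Permutation: $\mathrm{R}_1$ permutes above $\mathrm{R}_2$ iff whenever $\mathcal{G}$ is obtained from g-sequents $\mathcal{G}_1,\dots,\mathcal{G}_n$ by an application of some $\sigma\in\mathrm{R}_2$ followed by an application of some $\rho\in\mathrm{R}_1$, then $\mathcal{G}$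 can be obtained from $\mathcal{G}_1,\dots,\mathcal{G}_n$ by applications of $\rho$ followed by an application of $\sigma$. *)

From HB Require Import structures.
From mathcomp Require Import all_boot finmap.
From Stdlib Require Import Relations.

Set Implicit Arguments.
Unset Strict Implicit.
Unset Printing Implicit Defensive.

Local Open Scope fset_scope.

(* The countably infinite set of sequents (atomic labels). *)
Definition sequent := nat.

Section HornRules.

Variable E : finType.

(* Letters of \overline{E} \cup E : (a, false) is a, (a, true) is \bar a. *)
Definition letter := (E * bool)%type.
Definition bar_letter (x : letter) : letter := (x.1, ~~ x.2).
Definition bar_string (s : seq letter) : seq letter := rev (map bar_letter s).

Variant horn := HornF of E & seq letter | HornB of E & seq letter.

Definition horn_string (h : horn) : seq letter :=
  match h with HornF _ s => s | HornB _ s => s end.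

Definition production := (letter * seq letter)%type.
Definition bar_prod (p : production) : production :=
  (bar_letter p.1, bar_string p.2).

Definition grammar (h : horn) : production -> Prop :=
  fun p => match h with
  | HornF a s => p = ((a, false), s) \/ p = ((a, true), bar_string s)
  | HornB a s => p = ((a, true), s) \/ p = ((a, false), bar_string s)
  end.

Definition prodpair := (production * production)%type.

Definition prod_pairs (G : production -> Prop) : prodpair -> Prop :=
  fun pp => G pp.1 /\ pp.2 = bar_prod pp.1.

(* Production pairs are unordered pairs {p, \bar p}. *)
Definition same_pair (pp pp' : prodpair) : Prop :=
  pp' = pp \/ pp' = (pp.2, pp.1).

Definition depends (pp pp' : prodpair) : Prop :=
  ~ same_pair pp pp' /\
  (exists s1 s2, pp.1.2 = s1 ++ pp'.1.1 :: s2 \/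
                 bar_string pp.1.2 = s1 ++ pp'.1.1 :: s2).

Definition union_grammar (H : horn -> Prop) : production -> Prop :=
  fun p => exists h, H h /\ grammar h p.

Definition dep_le (G : production -> Prop) : relation prodpair :=
  clos_refl_trans prodpair
    (fun pp pp' => prod_pairs G pp /\ prod_pairs G pp' /\ depends pp pp').

Definition DG_le (H : horn -> Prop) (h h' : horn) : Prop :=
  exists pp pp', prod_pairs (grammar h) pp /\ prod_pairs (grammar h') pp' /\
                 dep_le (union_grammar H) pp pp'.

Definition fracturable (T : Type) (V : T -> Prop) (le : T -> T -> Prop)
  (V' : T -> Prop) : Prop :=
  (forall v, V' v -> V v) /\
  ~ (exists v v', V' v /\ V v' /\ ~ V' v' /\ le v v').

Variable U : choiceType.

(* Gamma |- Delta : Gamma the edge atoms  w E_a u  encoded as (a, w, u),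
   Delta the prefixed sequents  w : S  encoded as (w, S). *)
Record gseq := GSeq {
  gedges : {fset (E * U * U)};
  glabels : {fset (U * sequent)} }.

Definition gvertices (G : gseq) : {fset U} := [fset p.1 | p in glabels G].

Definition wf_gseq (G : gseq) : Prop :=
  (forall w S S', (w, S) \in glabels G -> (w, S') \in glabels G -> S = S') /\
  (forall a w u, (a, w, u) \in gedges G ->
     w \in gvertices G /\ u \in gvertices G).

Definition edge_step (Gam : {fset (E * U * U)}) (w : U) (x : letter) (v : U) :=
  if x.2 then (x.1, v, w) \in Gam else (x.1, w, v) \in Gam.

Fixpoint epath (Gam : {fset (E * U * U)}) (w : U) (s : seq letter) (u : U)
  : Prop :=
  match s with
  | [::] => w = u
  | x :: s' => exists v, edge_step Gam w x v /\ epath Gam v s' u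
  end.

Definition horn_atom (h : horn) (w u : U) : E * U * U :=
  match h with HornF a _ => (a, w, u) | HornB a _ => (a, u, w) end.

(* An application of h with premise P and conclusion C:
   P = Gamma, w E_s u, (new atom) |- Delta and C = Gamma, w E_s u |- Delta,
   the comma being disjoint union. *)
Definition horn_app (h : horn) (P C : gseq) : Prop :=
  wf_gseq P /\ wf_gseq C /\ glabels P = glabels C /\
  exists w u, horn_atom h w u \notin gedges C /\
              gedges P = horn_atom h w u |` gedges C /\
              epath (gedges C) w (horn_string h) u.

Definition permutes_above (R1 R2 : horn -> Prop) : Prop :=
  forall rho sigma, R1 rho -> R2 sigma ->
  forall G1 G2 G, horn_app sigma G1 G2 -> horn_app rho G2 G ->
  exists G', clos_trans gseq (horn_app rho) G1 G' /\ horn_app sigma G' G.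

End HornRules.

(* Let sigma in H' produce G2 from G1 by adding an atom, and rho in H \ H'
   produce G from G2 by adding another atom.  The proof has two parts.
   - Swapping (lemma [horn_app_swap]): if the path  w E_s u  witnessing the
     sigma-step is still present among the edges of G, then applying rho first
     (to G1 with sigma's atom removed) and sigma second yields G.  This is pure
     bookkeeping on finite edge sets.
   - Non-interference (lemma [dep_of_shared_letter]): the only way the path of
     sigma can be lost is if it uses the atom created by rho, i.e. a letter of
     sigma's string has rho's edge type.  The production of sigma whose right
     side is that string then yields a production pair on which a production
     pair of rho depends, so sigma \sqsubseteq' rho in DG(H); this is excluded
     because sigma is in the fracturable set H' and rho is not. *)
From HB Require Import structures.
From mathcomp Require Import all_boot finmap.
From Stdlib Require Import Relations Classical.

Set Implicit Arguments.
Unset Strict Implicit.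
Unset Printing Implicit Defensive.

Local Open Scope fset_scope.

Section HornPermutation.

Variable E : finType.

Lemma bar_letterK : involutive (@bar_letter E).
Proof. by case=> a b; rewrite /bar_letter /= negbK. Qed.

Lemma bar_stringK : involutive (@bar_string E).
Proof.
move=> s; rewrite /bar_string map_rev revK -map_comp.
by rewrite (eq_map bar_letterK) map_id.
Qed.

Lemma bar_prodK : involutive (@bar_prod E).
Proof.
by case=> x t; rewrite /bar_prod /= bar_letterK bar_stringK.
Qed.

Lemma grammar_bar (h : horn E) (p : production E) :
  grammar h p -> grammar h (bar_prod p).
Proof.
rewrite /bar_prod /bar_letter; case: h => a s /= [->|->] /=;
  by [right | left; rewrite bar_stringK].
Qed.

Lemma prod_pairs_same (h : horn E) (pp pp' : prodpair E) :
  pp.2 = bar_prod pp.1 -> prod_pairs (grammar h) pp' -> same_pair pp pp' ->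
  prod_pairs (grammar h) pp.
Proof.
move=> pp2 pp'_h [e|e]; first by rewrite -e.
split=> //; have [g' _] := pp'_h.
have e1 : pp'.1 = pp.2 by rewrite e.
by rewrite -[pp.1]bar_prodK -pp2 -e1; apply: grammar_bar.
Qed.

Definition horn_type (h : horn E) : E :=
  match h with HornF a _ => a | HornB a _ => a end.

Definition main_prod (h : horn E) : production E :=
  match h with HornF a s => ((a, false), s) | HornB a s => ((a, true), s) end.

Lemma grammar_main_prod (h : horn E) : grammar h (main_prod h).
Proof. by case: h => a s /=; left. Qed.

Lemma main_prod_string (h : horn E) : (main_prod h).2 = horn_string h.
Proof. by case: h. Qed.

Lemma grammar_lhs (h : horn E) (x : letter E) :
  x.1 = horn_type h -> exists t, grammar h (x, t).
Proof.
case: x => a b /= ->; case: h => c s /=; case: b.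
- by exists (bar_string s); right.
- by exists s; left.
- by exists s; left.
- by exists (bar_string s); right.
Qed.

(* If a letter of the string of sigma has the edge type of rho, then rho
   depends on sigma in DG(H): the pair of [main_prod sigma] is below a
   production pair of rho (equal to it, or with a dependency step). *)
Lemma dep_of_shared_letter (H : horn E -> Prop) (sigma rho : horn E)
    (x : letter E) :
  H sigma -> H rho -> x \in horn_string sigma -> x.1 = horn_type rho ->
  DG_le H sigma rho.
Proof.
move=> Hsigma Hrho xin xtype.
set pp := (main_prod sigma, bar_prod (main_prod sigma)).
have [t g_rho] := grammar_lhs xtype.
set pp' := ((x, t), bar_prod (x, t)).
have pp_sigma : prod_pairs (grammar sigma) pp.
  by split=> //; apply: grammar_main_prod.
have pp'_rho : prod_pairs (grammar rho) pp' by [].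
exists pp; case: (classic (same_pair pp pp')) => [same|distinct].
  exists pp; do 2 split=> //; last exact: rt_refl.
  exact: prod_pairs_same pp'_rho same.
exists pp'; do 2 split=> //; apply: rt_step.
split; first by split=> //; exists sigma; case: pp_sigma.
split; first by split=> //; exists rho.
split=> //; move: xin; rewrite -main_prod_string => /splitPr [s1 s2].
by exists s1, s2; left.
Qed.

Variable U : choiceType.

Implicit Types (Gam : {fset (E * U * U)}) (r : E * U * U).

Lemma horn_atom_type (h : horn E) (w u : U) :
  (horn_atom h w u).1.1 = horn_type h.
Proof. by case: h. Qed.

Lemma epath_add r Gam (w u : U) (s : seq (letter E)) :
  epath Gam w s u -> epath (r |` Gam) w s u.
Proof.
elim: s w => [|x s IH] w //= [v [step path]]; exists v; split; last exact: IH.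
by move: step; rewrite /edge_step; case: (x.2) => ?; apply: fset1Ur.
Qed.

Lemma epath_add_cases r Gam (w u : U) (s : seq (letter E)) :
  epath (r |` Gam) w s u ->
  epath Gam w s u \/ exists2 x, x \in s & x.1 = r.1.1.
Proof.
elim: s w => [|x s IH] w /=; first by left.
move=> [v [step path]].
have [step'|xtype] : edge_step Gam w x v \/ x.1 = r.1.1.
  by move: step; rewrite /edge_step; case: (x.2) => /fset1UP [<-|?];
    by [right | left].
- case: (IH _ path) => [path'|[y yin ytype]]; first by left; exists v.
  by right; exists y; rewrite // in_cons yin orbT.
- by right; exists x; rewrite // in_cons eqxx.
Qed.

Lemma wf_gseq_sub (A B : gseq E U) :
  glabels A = glabels B -> {subset gedges A <= gedges B} ->
  wf_gseq B -> wf_gseq A.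
Proof.
move=> same_labels sub [labels_fun edges_in].
rewrite /wf_gseq /gvertices same_labels; split=> // a w u /sub.
exact: edges_in.
Qed.

Lemma horn_app_swap (sigma rho : horn E) (G1 G2 G : gseq E U) (w1 u1 : U) :
  horn_app sigma G1 G2 -> horn_app rho G2 G ->
  epath (gedges G) w1 (horn_string sigma) u1 ->
  horn_atom sigma w1 u1 \notin gedges G2 ->
  gedges G1 = horn_atom sigma w1 u1 |` gedges G2 ->
  exists G', horn_app rho G1 G' /\ horn_app sigma G' G.
Proof.
move=> [wf1 [_ [labels12 _]]]
  [_ [wfG [labels2 [w2 [u2 [ra_new [edges2 path_rho]]]]]]]
  path_sigma sa_new edges12.
set sa := horn_atom sigma w1 u1 in sa_new edges12 path_sigma *.
set ra := horn_atom rho w2 u2 in ra_new edges2 path_rho *.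
have sa_newG : sa \notin gedges G.
  by apply: contra sa_new; rewrite edges2; apply: fset1Ur.
have ra_sa : ra != sa by apply: contraNneq sa_new => <-; rewrite edges2 fset1U1.
set G' := GSeq (sa |` gedges G) (glabels G).
have edges1 : gedges G1 = ra |` gedges G' by rewrite edges12 edges2 fsetUCA.
have wf' : wf_gseq G'.
  apply: (wf_gseq_sub _ _ wf1); first by rewrite labels12 labels2.
  by move=> e; rewrite edges1 => ?; apply: fset1Ur.
exists G'; split; do 3 split=> //.
- by rewrite labels12 labels2.
- exists w2, u2; split; first by rewrite in_fset1U negb_or ra_sa.
  by split=> //; apply: epath_add.
- by exists w1, u1.
Qed.

End HornPermutation.

Theorem mainTheorem5 (E : finType) (U : choiceType) (HE : 0 < #|{: E}|)
  (H H' : horn E -> Prop) :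
  fracturable H (DG_le H) H' ->
  permutes_above U (fun h => H h /\ ~ H' h) H'.
Proof.
move=> [H'_sub not_dep] rho sigma [Hrho not_H'rho] H'sigma G1 G2 G
  app_sigma app_rho.
case: (app_sigma) => [_ [_ [_ [w1 [u1 [sa_new [edges12 path_sigma]]]]]]].
case: (app_rho) => [_ [_ [_ [w2 [u2 [_ [edges2 _]]]]]]].
(* The path of sigma cannot use the atom added by rho. *)
have path_sigmaG : epath (gedges G) w1 (horn_string sigma) u1.
  move: path_sigma; rewrite edges2 => /epath_add_cases [//|[x xin xtype]].
  exfalso; apply: not_dep; exists sigma, rho; do 3 split=> //.
  apply: (dep_of_shared_letter (H'_sub _ H'sigma) Hrho xin).
  by rewrite xtype horn_atom_type.
have [G' [rho_first sigma_second]] :=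
  horn_app_swap app_sigma app_rho path_sigmaG sa_new edges12.
by exists G'; split=> //; apply: t_step.
Qed.
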